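(* Let $I\subseteq\mathbb K[x,y]$ be a good ideal. Then $I^k$ is a good ideal for every integer $k\ge1$.
   Context: Let $\mathbb K$ be a field, $R=\mathbb K[x_1,\dots,x_n]$ (here $n=2$), $\mathfrak m=\langle x_1,\dots,x_n\rangle$, $\mathbb N=\{0,1,2,\dots\}$. A monomial $x_1^{\alpha_1}\cdots x_n^{\alpha_n}$ is identified with the point $(\alpha_1,\dots,\alpha_n)\in\mathbb N^n$. For a monomial ideal $I$, $G(I)$ denotes its (unique) minimal monomial generating set. If $I$ is an $\mathfrak m$-primary monomial ideal, then for each $i$ there is a unique $d_i\ge1$ with $x_i^{d_i}\in G(I)$; write $\mu_i=x_i^{d_i}$. For $(a_1,\dots,a_n)\in\mathbb N^n$ the box associated to $I$ is $B_{a_1,\dots,a_n}=([a_1d_1,(a_1+1)d_1]\times\cdots\times[a_nd_n,(a_n+1)d_n])\cap\mathbb N^n$; a monomial belongs to a box if its exponent vector does. An $\mathfrak m$-primary monomial ideal $I$ is called good if for every integer $l\ge1$, every element of $G(I^l)$ belongs to some box $B_{a_1,\dots,a_n}$ with $a_1+\dots+a_n=l-1$; otherwise bad. (Goodness of $I^k$ is defined with respect to its own pure powers $x_i^{kd_i}\in G(I^k)$.) *)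

From mathcomp Require Import all_boot.
Set Implicit Arguments. Unset Strict Implicit. Unset Printing Implicit Defensive.

(* A set of monomials x^a y^b, identified with exponent vectors (a,b). *)
Definition mset := nat * nat -> Prop.

Definition mdvd (a b : nat * nat) : bool := (a.1 <= b.1) && (a.2 <= b.2).

Definition mmul (a b : nat * nat) : nat * nat := (a.1 + b.1, a.2 + b.2).
Definition mprod (s : seq (nat * nat)) : nat * nat := foldr mmul (0, 0) s.

(* The set of monomials of a monomial ideal is closed under multiplication
   by monomials (equivalently: upward closed for divisibility). *)
Definition is_monomial_ideal (I : mset) : Prop :=
  forall a b, I a -> mdvd a b -> I b.

Definition ideal_pow (I : mset) (l : nat) : mset :=
  fun m => exists s : seq (nat * nat),
    size s = l /\ (forall a, a \in s -> I a) /\ mdvd (mprod s) m.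

Definition mingens (I : mset) : mset :=
  fun m => I m /\ forall m', I m' -> mdvd m' m -> m' = m.

Definition m_primary (I : mset) : Prop :=
  ~ I (0, 0) /\ (exists a, I (a, 0)) /\ (exists b, I (0, b)).

Definition in_box (d1 d2 a1 a2 : nat) (m : nat * nat) : Prop :=
  a1 * d1 <= m.1 <= a1.+1 * d1 /\ a2 * d2 <= m.2 <= a2.+1 * d2.

Definition good (I : mset) : Prop :=
  m_primary I /\
  forall d1 d2, mingens I (d1, 0) -> mingens I (0, d2) ->
  forall l, 0 < l -> forall m, mingens (ideal_pow I l) m ->
  exists a1 a2, a1 + a2 = l.-1 /\ in_box d1 d2 a1 a2 m.

From mathcomp Require Import all_boot zify.
From Stdlib Require Import Classical Wf_nat.
Set Implicit Arguments. Unset Strict Implicit.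

(* Since (I^k)^l = I^(kl) and the pure powers of I^k are x^(k d1), y^(k d2),
   a minimal generator of (I^k)^l lies in a box B_(a1,a2) of I with
   a1 + a2 = kl - 1.  That box is contained in the box of I^k with indices
   (a1 %/ k, a2 %/ k), and these indices add up to l - 1 because the two
   remainders modulo k sum to less than 2k. *)

Lemma mdvd_refl a : mdvd a a.
Proof. by rewrite /mdvd !leqnn. Qed.

Lemma mdvd_trans a b c : mdvd a b -> mdvd b c -> mdvd a c.
Proof. by rewrite /mdvd => /andP[? ?] /andP[? ?]; apply/andP; split; lia. Qed.

Lemma mdvd_mmul a b c d : mdvd a b -> mdvd c d -> mdvd (mmul a c) (mmul b d).
Proof. by rewrite /mdvd /mmul => /andP[? ?] /andP[? ?]; apply/andP; split=> /=; lia. Qed.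

Lemma mprod_cat s t : mprod (s ++ t) = mmul (mprod s) (mprod t).
Proof.
elim: s => [|x s IHs] /=; first by case: (mprod t).
by rewrite IHs /mmul /= !addnA.
Qed.

Lemma mprod_nseq k a : mprod (nseq k a) = (k * a.1, k * a.2).
Proof. by elim: k => [|k IHk] //=; rewrite IHk /mmul /= !mulSn. Qed.

Lemma mem_mdvd_mprod x s : x \in s -> mdvd x (mprod s).
Proof.
elim: s => [|y s IHs] //=; rewrite in_cons /mdvd /mmul /=.
by case/orP=> [/eqP-> | /IHs /andP[? ?]]; apply/andP; split; lia.
Qed.

Lemma leq_mprod1 d t : (forall x, x \in t -> d <= x.1) -> size t * d <= (mprod t).1.
Proof.
elim: t => [|x t IHt] //= le_dt; rewrite mulSn.
apply: leq_add; first by apply: le_dt; rewrite mem_head.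
by apply: IHt => y ty; apply: le_dt; rewrite inE ty orbT.
Qed.

Lemma mingens_ext (A B : mset) : (forall x, A x <-> B x) -> forall m, mingens A m -> mingens B m.
Proof. by move=> AB m [/AB Am minA]; split=> // m' /AB; apply: minA. Qed.

Lemma ideal_pow_scale I k a : I a -> ideal_pow I k (k * a.1, k * a.2).
Proof.
move=> Ia; exists (nseq k a); rewrite size_nseq mprod_nseq mdvd_refl.
by split=> //; split=> // x /nseqP[->].
Qed.

Lemma ideal_pow_sub I k m : is_monomial_ideal I -> 0 < k -> ideal_pow I k m -> I m.
Proof.
move=> MI; case: k => [|k] // _ [[|x t] [// _ [It dvd_tm]]].
apply: (MI x); first by apply: It; rewrite mem_head.
exact: mdvd_trans (mem_mdvd_mprod (mem_head x t)) dvd_tm.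
Qed.

Lemma m_primary_pow I k : is_monomial_ideal I -> 0 < k -> m_primary I -> m_primary (ideal_pow I k).
Proof.
move=> MI k_gt0 [I00 [[a Ia] [b Ib]]]; split; first by move/(ideal_pow_sub MI k_gt0).
split; [exists (k * a) | exists (k * b)].
- by have := ideal_pow_scale k Ia; rewrite /= muln0.
- by have := ideal_pow_scale k Ib; rewrite /= muln0.
Qed.

Lemma ideal_pow_flatten I k s : (forall a, a \in s -> ideal_pow I k a) ->
  exists t, [/\ size t = k * size s, forall x, x \in t -> I x & mdvd (mprod t) (mprod s)].
Proof.
elim: s => [|a s IHs] Js; first by exists [::]; rewrite muln0 mdvd_refl.
have [t [St It dvd_ts]] := IHs (fun b sb => Js b (mem_behead (s := a :: s) sb)).
have [ta [Sta [Ita dvd_ta]]] := Js a (mem_head a s).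
exists (ta ++ t); split.
- by rewrite size_cat Sta St mulnS.
- by move=> x; rewrite mem_cat => /orP[/Ita | /It].
- by rewrite mprod_cat; apply: mdvd_mmul.
Qed.

Lemma ideal_pow_reshape I k l t : size t = k * l -> (forall x, x \in t -> I x) ->
  exists s, [/\ size s = l, forall a, a \in s -> ideal_pow I k a & mprod s = mprod t].
Proof.
elim: l t => [|l IHl] t St It.
  by exists [::]; move: St; rewrite muln0 => /size0nil ->.
have Sd : size (drop k t) = k * l by rewrite size_drop St mulnS addKn.
have [s [Ss Js Es]] := IHl _ Sd (fun x dx => It x (mem_drop dx)).
exists (mprod (take k t) :: s); split; first by rewrite /= Ss.
- move=> a; rewrite in_cons => /orP[/eqP-> | /Js //].
  exists (take k t); split; first by rewrite size_take St mulnS; case: ifP; lia.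
  by split; [move=> x /mem_take /It | exact: mdvd_refl].
- by rewrite /= Es -mprod_cat cat_take_drop.
Qed.

Lemma ideal_powM I k l m : ideal_pow (ideal_pow I k) l m <-> ideal_pow I (k * l) m.
Proof.
split=> [[s [Ss [Js dvd_sm]]] | [t [St [It dvd_tm]]]].
- have [t [St It dvd_ts]] := ideal_pow_flatten Js.
  by exists t; rewrite St Ss; split=> //; split=> //; apply: mdvd_trans dvd_sm.
- have [s [Ss Js Es]] := ideal_pow_reshape St It.
  by exists s; rewrite Es.
Qed.

Lemma mingens_x_uniq (J : mset) e e' : mingens J (e, 0) -> mingens J (e', 0) -> e = e'.
Proof.
wlog le_ee' : e e' / e <= e'.
  by move=> hwlog Je Je'; case: (leqP e e') => [|/ltnW] le; [|symmetry]; apply: hwlog.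
move=> [Je _] [_ minJ].
by have [] : (e, 0) = (e', 0) by apply: minJ; rewrite // /mdvd /= le_ee'.
Qed.

Lemma exists_mingens_x I : (exists a, I (a, 0)) -> exists d, mingens I (d, 0).
Proof.
move=> Ix; have [d [[Id min_d] _]] :=
  dec_inh_nat_subset_has_unique_least_element (fun c => I (c, 0)) (fun c => classic _) Ix.
exists d; split=> // -[c c'] Icc' /andP[/= le_cd le_c'0].
have c'0 : c' = 0 by lia.
by move: Icc'; rewrite c'0 => /min_d /leP le_dc; congr pair; lia.
Qed.

Lemma mingens_x_min I d c : mingens I (d, 0) -> I (c, 0) -> d <= c.
Proof.
move=> [_ min_d] Ic; rewrite leqNgt; apply/negP => lt_cd.
have : (c, 0) = (d, 0) by apply: min_d; rewrite // /mdvd /= ltnW.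
by case=> c_d; rewrite c_d ltnn in lt_cd.
Qed.

Lemma mingens_pow_x I k d : mingens I (d, 0) -> mingens (ideal_pow I k) (k * d, 0).
Proof.
move=> Id; split; first by have := ideal_pow_scale k Id.1; rewrite /= muln0.
move=> [c c'] [t [St [It dvd_tc]]] /andP[/= le_ckd le_c'0].
have ge_dt x : x \in t -> d <= x.1.
  move=> tx; have /andP[_ /= le_x2c'] := mdvd_trans (mem_mdvd_mprod tx) dvd_tc.
  case: x tx le_x2c' => x1 x2 tx /= le_x2c'; have x20 : x2 = 0 by lia.
  by apply: (mingens_x_min Id); rewrite -x20; apply: It.
have := leq_mprod1 ge_dt; rewrite St mulnC.
by case/andP: dvd_tc => /= ? ? ?; congr pair; lia.
Qed.

Lemma mingens_pow_x_inv I k e : (exists a, I (a, 0)) ->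
  mingens (ideal_pow I k) (e, 0) -> exists d, mingens I (d, 0) /\ e = k * d.
Proof.
move=> /exists_mingens_x[d Id] Je; exists d; split=> //.
exact: mingens_x_uniq Je (mingens_pow_x k Id).
Qed.

Definition mswap (m : nat * nat) : nat * nat := (m.2, m.1).

Lemma mswapK : involutive mswap.
Proof. by case. Qed.

Lemma mdvd_swap a b : mdvd (mswap a) (mswap b) = mdvd a b.
Proof. by rewrite /mdvd andbC. Qed.

Lemma mprod_map_swap s : mprod (map mswap s) = mswap (mprod s).
Proof. by elim: s => [|x s IHs] //=; rewrite IHs. Qed.

Lemma ideal_pow_swap I k m : ideal_pow (I \o mswap) k m <-> ideal_pow I k (mswap m).
Proof.
split=> [] [t [St [It dvd_tm]]]; exists (map mswap t); rewrite size_map mprod_map_swap.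
- by split=> //; split; [move=> _ /mapP[x tx ->]; apply: It | rewrite mdvd_swap].
- split=> //; split; last by rewrite -mdvd_swap !mswapK.
  by move=> _ /mapP[x tx ->] /=; rewrite mswapK; apply: It.
Qed.

Lemma mingens_swap (J : mset) m : mingens (J \o mswap) m <-> mingens J (mswap m).
Proof.
split=> -[Jm minJ]; split=> // m' Jm'.
- move=> dvd_m'm; have <- : mswap m' = m.
    by apply: minJ; rewrite /= ?mswapK // -mdvd_swap mswapK.
  by rewrite mswapK.
- by move=> dvd_m'm; apply: (can_inj mswapK); apply: minJ; rewrite ?mdvd_swap.
Qed.

Lemma mingens_pow_y_inv I k e : (exists b, I (0, b)) ->
  mingens (ideal_pow I k) (0, e) -> exists d, mingens I (0, d) /\ e = k * d.
Proof.
move=> Iy Je; have Je' : mingens (ideal_pow (I \o mswap) k) (e, 0).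
  apply: mingens_ext (fun x => iff_sym (ideal_pow_swap I k x)) _ _.
  by apply/mingens_swap.
have [d [Id ->]] := mingens_pow_x_inv Iy Je'.
by exists d; split=> //; apply/(mingens_swap I (d, 0)).
Qed.

Lemma divn_add_pred k l a1 a2 : 0 < k -> 0 < l -> a1 + a2 = (k * l).-1 ->
  a1 %/ k + a2 %/ k = l.-1.
Proof.
move=> k_gt0 l_gt0 Ea.
have ea1 := divn_eq a1 k; have ea2 := divn_eq a2 k.
have := ltn_pmod a1 k_gt0; have := ltn_pmod a2 k_gt0.
set q1 := a1 %/ k in ea1 *; set q2 := a2 %/ k in ea2 *.
set r1 := a1 %% k in ea1 *; set r2 := a2 %% k in ea2 * => lt_r2k lt_r1k.
have kl_gt0 : 0 < k * l by rewrite muln_gt0 k_gt0.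
have : k * (q1 + q2) < k * l by nia.
have : k * l < k * (q1 + q2).+2 by nia.
by rewrite !ltn_pmul2l //; lia.
Qed.

Lemma coarsen_interval k a d x : 0 < k -> a * d <= x <= a.+1 * d ->
  a %/ k * (k * d) <= x <= (a %/ k).+1 * (k * d).
Proof.
move=> k_gt0 /andP[le_adx le_xad]; have ea := divn_eq a k; have := ltn_pmod a k_gt0.
rewrite !mulnA; set q := a %/ k in ea *; set r := a %% k in ea * => lt_rk.
apply/andP; split.
- by apply: leq_trans le_adx; rewrite leq_mul2r ea leq_addr orbT.
- by apply: leq_trans le_xad _; rewrite leq_mul2r ea; apply/orP; right; lia.
Qed.

Lemma in_box_coarsen k d1 d2 a1 a2 m : 0 < k -> in_box d1 d2 a1 a2 m ->
  in_box (k * d1) (k * d2) (a1 %/ k) (a2 %/ k) m.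
Proof. by move=> k_gt0 [box1 box2]; split; apply: coarsen_interval. Qed.

Theorem mainTheorem13 (I : mset) :
  is_monomial_ideal I -> good I ->
  forall k : nat, 0 < k -> good (ideal_pow I k).
Proof.
move=> MI [primI goodI] k k_gt0; split; first exact: m_primary_pow.
move=> e1 e2 gen_e1 gen_e2 l l_gt0 m gen_m.
have [_ [Ix Iy]] := primI.
have [d1 [gen_d1 ->]] := mingens_pow_x_inv Ix gen_e1.
have [d2 [gen_d2 ->]] := mingens_pow_y_inv Iy gen_e2.
have kl_gt0 : 0 < k * l by rewrite muln_gt0 k_gt0.
have gen_m' := mingens_ext (ideal_powM I k l) gen_m.
have [a1 [a2 [Ea box_m]]] := goodI d1 d2 gen_d1 gen_d2 (k * l) kl_gt0 m gen_m'.
exists (a1 %/ k), (a2 %/ k); split; first exact: divn_add_pred Ea.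
exact: in_box_coarsen.
Qed.
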